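(* Let $f(x)=x^5+px^4+qx^3+rx^2+sx+t$ with real coefficients and let $D$, $L_1$, $L_2$, $D_2$ be as in the context. Suppose $D=0$, $L_1=0$ and $L_2\neq 0$. Then: (a) if $D_2>0$, $f$ has two distinct real double roots and one real simple root; (b) if $D_2<0$, $f$ has a pair of non-real complex conjugate double roots and one real simple root; (c) if $D_2=0$, $f$ has one triple root and two simple roots; in this case, if $L_2>0$ the triple root and both simple roots are real, and if $L_2<0$ the triple root is real and the two simple roots are non-real complex conjugates.
   Context: Let $\alpha_1,\dots,\alpha_5\in\mathbb{C}$ be the roots of $f$ listed with multiplicity. $D=\prod_{1\le i<j\le 5}(\alpha_i-\alpha_j)^2$ is the discriminant of $f$. $L_2=40qs-16p^2s-8rp^3+38rpq+3p^2q^2-12q^3-45r^2$. $L_1=-264ps^2r-12p^3tq^2+36r^3pq-124srpq^2+28srp^3q+260sptq-132p^2qrt+240pr^2t+234sqr^2+32p^4tr+48ptq^3-56sp^3t-80q^2rt+194qs^2p^2-600str-6q^3sp^2+2p^2q^2r^2-12sr^2p^2-54r^4+320s^3-8q^3r^2-8r^3p^3+250qt^2-176q^2s^2+24q^4s-36p^4s^2-100p^2t^2$. $D_2=24p^2q^4s-1100q^3rt+800p^3qst-1735p^2q^2rt-3p^2qr^2s+20pq^3rs-600p^2rst-1150pq^2st+5475pqr^2t-1380pqrs^2+1500qrst+6p^3qr^3+p^4q^2r^2-128p^6rt+660pq^4t-136p^5st-3p^4q^3s-236p^4qs^2+337p^2q^2s^2+48p^5q^2t-357p^3q^3t-12p^4r^2s-45pr^3s+60q^2r^2s-8p^2q^3r^2-500p^2qt^2-24pq^2r^3-1380p^3r^2t+408p^3rs^2-4p^5qrs+1028p^4qrt+11p^3q^2rs+36p^6s^2+100p^4t^2+9p^2r^4-48q^5s+16q^4r^2+160q^3s^2+625q^2t^2-3375r^3t+900r^2s^2$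 (a positive multiple of the discriminant of the degree-2 remainder in the Sturm sequence of $f$). *)

From HB Require Import structures.
From mathcomp Require Import all_boot all_order all_algebra.
Set Implicit Arguments. Unset Strict Implicit. Unset Printing Implicit Defensive.
Import Order.TTheory GRing.Theory Num.Theory.
Local Open Scope ring_scope.

Section Quintic.
Variable C : numClosedFieldType.

Definition quintic (p q r s t : C) : {poly C} :=
  'X^5 + p%:P * 'X^4 + q%:P * 'X^3 + r%:P * 'X^2 + s%:P * 'X + t%:P.

Definition discr5 (alpha : 'I_5 -> C) : C :=
  \prod_(i < 5) \prod_(j < 5 | (i < j)%N) (alpha i - alpha j) ^+ 2.

Definition L2 (p q r s t : C) : C :=
  40 * q * s - 16 * p^+2 * s - 8 * r * p^+3 + 38 * r * p * q + 3 * p^+2 * q^+2 - 12 * q^+3 - 45 * r^+2.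

Definition L1 (p q r s t : C) : C :=
  -264 * p * s^+2 * r - 12 * p^+3 * t * q^+2 + 36 * r^+3 * p * q - 124 * s * r * p * q^+2 + 28 * s * r * p^+3 * q
  + 260 * s * p * t * q - 132 * p^+2 * q * r * t + 240 * p * r^+2 * t + 234 * s * q * r^+2 + 32 * p^+4 * t * r
  + 48 * p * t * q^+3 - 56 * s * p^+3 * t - 80 * q^+2 * r * t + 194 * q * s^+2 * p^+2 - 600 * s * t * r
  - 6 * q^+3 * s * p^+2 + 2 * p^+2 * q^+2 * r^+2 - 12 * s * r^+2 * p^+2 - 54 * r^+4 + 320 * s^+3
  - 8 * q^+3 * r^+2 - 8 * r^+3 * p^+3 + 250 * q * t^+2 - 176 * q^+2 * s^+2 + 24 * q^+4 * s
  - 36 * p^+4 * s^+2 - 100 * p^+2 * t^+2.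

Definition D2 (p q r s t : C) : C :=
  24 * p^+2 * q^+4 * s - 1100 * q^+3 * r * t + 800 * p^+3 * q * s * t - 1735 * p^+2 * q^+2 * r * t
  - 3 * p^+2 * q * r^+2 * s + 20 * p * q^+3 * r * s - 600 * p^+2 * r * s * t - 1150 * p * q^+2 * s * t
  + 5475 * p * q * r^+2 * t - 1380 * p * q * r * s^+2 + 1500 * q * r * s * t + 6 * p^+3 * q * r^+3
  + p^+4 * q^+2 * r^+2 - 128 * p^+6 * r * t + 660 * p * q^+4 * t - 136 * p^+5 * s * t
  - 3 * p^+4 * q^+3 * s - 236 * p^+4 * q * s^+2 + 337 * p^+2 * q^+2 * s^+2 + 48 * p^+5 * q^+2 * t
  - 357 * p^+3 * q^+3 * t - 12 * p^+4 * r^+2 * s - 45 * p * r^+3 * s + 60 * q^+2 * r^+2 * s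
  - 8 * p^+2 * q^+3 * r^+2 - 500 * p^+2 * q * t^+2 - 24 * p * q^+2 * r^+3 - 1380 * p^+3 * r^+2 * t
  + 408 * p^+3 * r * s^+2 - 4 * p^+5 * q * r * s + 1028 * p^+4 * q * r * t + 11 * p^+3 * q^+2 * r * s
  + 36 * p^+6 * s^+2 + 100 * p^+4 * t^+2 + 9 * p^+2 * r^+4 - 48 * q^+5 * s + 16 * q^+4 * r^+2
  + 160 * q^+3 * s^+2 + 625 * q^+2 * t^+2 - 3375 * r^+3 * t + 900 * r^+2 * s^+2.

End Quintic.

From HB Require Import structures.
From mathcomp Require Import all_boot all_order all_algebra.
From mathcomp Require Import ring zify.
Set Implicit Arguments. Unset Strict Implicit. Unset Printing Implicit Defensive.
Import Order.TTheory GRing.Theory Num.Theory.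
Local Open Scope ring_scope.

(* By Vieta's formulas
   every coefficient expression is a polynomial in the roots, and on the
   relevant root patterns the invariants factor:
   - with a double root, f = (X-a)^2 (X-b)(X-c)(X-d), one has
       L1 = 2 ((a-b)(a-c)(a-d)(b-c)(b-d)(c-d))^2,
     so L1 = 0 forces a further coincidence: either a triple root
     (a,a,a,c,d) or two double roots (a,a,b,b,d);
   - for (a,a,a,c,d):  L2 = 3 ((a-c)(a-d)(c-d))^2  and  D2 = 0;
   - for (a,a,b,b,d):  L2 = 4 ((a-b)(a-d)(b-d))^2  and
       D2 = 4 ((a-b)^2)^3 ((d-a)(d-b))^4.
   L2 <> 0 makes the remaining roots distinct.  Complex conjugation preserves
   root multiplicities of a real polynomial (mup_conj), so a root whose
   multiplicity is unique is real and the others are real or swapped in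
   pairs; the signs of L2 and D2 then tell which situation occurs. *)

Lemma not_uniq_pair (T : eqType) (s : seq T) :
  ~~ uniq s -> exists x s', perm_eq s [:: x, x & s'].
Proof.
elim: s => [//|y s IHs] /=; rewrite negb_and negbK.
case: (boolP (y \in s)) => [ys _ | _ /= /IHs [x [s' Hs]]].
  by exists y, (rem y s); rewrite perm_cons perm_to_rem.
exists x, (y :: s'); rewrite -(perm_cons y) in Hs.
apply: (perm_trans Hs); exact/permPl/(perm_catCA [:: y] [:: x; x] s').
Qed.

Section QuinticRoots.
Variable C : numClosedFieldType.
Implicit Types (p q r s t a b c d e y z : C) (f : {poly C}).

Lemma discr5_not_uniq (alpha : 'I_5 -> C) :
  discr5 alpha = 0 -> ~~ uniq (codom alpha).
Proof.
move/eqP/prodf_eq0 => [i _ /prodf_eq0 [j ltij]].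
rewrite expf_eq0 subr_eq0 /= => /eqP eqij.
by apply/negP => /injectiveP inj; move: ltij; rewrite (inj _ _ eqij) ltnn.
Qed.

Lemma coef_quintic p q r s t (i : nat) :
  (quintic p q r s t)`_i = [:: t; s; r; q; p; 1]`_i.
Proof.
rewrite /quintic !coefD !coefCM !coefXn coefX coefC.
by case: i => [|[|[|[|[|[|i]]]]]] /=; rewrite ?nth_nil; ring.
Qed.

Lemma quintic_inj p q r s t p' q' r' s' t' :
  quintic p q r s t = quintic p' q' r' s' t' ->
  [/\ p = p', q = q', r = r', s = s' & t = t'].
Proof.
move=> E; have coefE i : [:: t; s; r; q; p; 1]`_i = [:: t'; s'; r'; q'; p'; 1]`_i.
  by rewrite -!coef_quintic E.
by split; [exact: (coefE 4%N) | exact: (coefE 3%N) | exact: (coefE 2%N)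
  | exact: (coefE 1%N) | exact: (coefE 0%N)].
Qed.

Lemma quintic_vieta p q r s t a b c d e :
  quintic p q r s t = \prod_(x <- [:: a; b; c; d; e]) ('X - x%:P) ->
  [/\ p = -(a + b + c + d + e),
      q = a*b + a*c + a*d + a*e + b*c + b*d + b*e + c*d + c*e + d*e,
      r = -(a*b*c + a*b*d + a*b*e + a*c*d + a*c*e + a*d*e + b*c*d + b*c*e
            + b*d*e + c*d*e),
      s = a*b*c*d + a*b*c*e + a*b*d*e + a*c*d*e + b*c*d*e
    & t = -(a*b*c*d*e)].
Proof.
move=> E; apply: quintic_inj; rewrite E !big_cons big_nil /quintic.
rewrite !(polyCN, polyCD, polyCM); ring.
Qed.

Lemma L1_double_root p q r s t a b c d :
  quintic p q r s t = \prod_(x <- [:: a; a; b; c; d]) ('X - x%:P) ->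
  L1 p q r s t = 2 * ((a - b) * (a - c) * (a - d) * (b - c) * (b - d) * (c - d)) ^+ 2.
Proof. by case/quintic_vieta => -> -> -> -> ->; rewrite /L1; ring. Qed.

Lemma L2_triple_root p q r s t a c d :
  quintic p q r s t = \prod_(x <- [:: a; a; a; c; d]) ('X - x%:P) ->
  L2 p q r s t = 3 * ((a - c) * (a - d) * (c - d)) ^+ 2.
Proof. by case/quintic_vieta => -> -> -> -> ->; rewrite /L2; ring. Qed.

Lemma D2_triple_root p q r s t a c d :
  quintic p q r s t = \prod_(x <- [:: a; a; a; c; d]) ('X - x%:P) ->
  D2 p q r s t = 0.
Proof. by case/quintic_vieta => -> -> -> -> ->; rewrite /D2; ring. Qed.

Lemma L2_two_double_roots p q r s t a b d :
  quintic p q r s t = \prod_(x <- [:: a; a; b; b; d]) ('X - x%:P) ->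
  L2 p q r s t = 4 * ((a - b) * (a - d) * (b - d)) ^+ 2.
Proof. by case/quintic_vieta => -> -> -> -> ->; rewrite /L2; ring. Qed.

Lemma D2_two_double_roots p q r s t a b d :
  quintic p q r s t = \prod_(x <- [:: a; a; b; b; d]) ('X - x%:P) ->
  D2 p q r s t = 4 * ((a - b) ^+ 2) ^+ 3 * ((d - a) * (d - b)) ^+ 4.
Proof. by case/quintic_vieta => -> -> -> -> ->; rewrite /D2; ring. Qed.

Lemma vandermonde3_neq0 k a b c :
  k * ((a - b) * (a - c) * (b - c)) ^+ 2 != 0 -> [/\ a != b, a != c & b != c].
Proof.
rewrite mulf_eq0 negb_or => /andP[_].
by rewrite expf_eq0 /= !mulf_eq0 !subr_eq0 !negb_or => /andP[/andP[-> ->] ->].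
Qed.

Lemma mup_gt0_mem f (rs : seq C) y :
  f = \prod_(x <- rs) ('X - x%:P) -> (0 < mup y f)%N -> y \in rs.
Proof. by move=> ->; rewrite mu_prod_XsubC -has_count has_pred1. Qed.

(* Conjugation preserves root multiplicities of a polynomial with real
   coefficients, since it maps divisors (X - z)^n to (X - z^* )^n. *)
Lemma mup_conj f z : map_poly Num.conj f = f -> mup z^* f = mup z f.
Proof.
move=> fR; have [->|nz] := eqVneq f 0.
  have mup0 x : mup x 0 = 0%N.
    rewrite /mup; case: arg_maxnP => [|[m]]; first by rewrite expr0 dvd1p.
    by rewrite size_poly0; case: m.
  by rewrite !mup0.
have le w : (mup w f <= mup w^* f)%N.
  rewrite mup_geq //.
  have -> : ('X - w^*%:P) ^+ mup w f = map_poly Num.conj (('X - w%:P) ^+ mup w f).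
    by rewrite rmorphXn rmorphB /= map_polyX map_polyC.
  by rewrite -{2}fR dvdp_map -mup_geq.
apply/anti_leq/andP; split; last exact: le.
by have := le z^*; rewrite conjCK.
Qed.

Lemma quintic_conj p q r s t :
  p \is Num.real -> q \is Num.real -> r \is Num.real ->
  s \is Num.real -> t \is Num.real ->
  map_poly Num.conj (quintic p q r s t) = quintic p q r s t.
Proof.
move=> /CrealP Rp /CrealP Rq /CrealP Rr /CrealP Rs /CrealP Rt.
apply/polyP => i; rewrite coef_map /= !coef_quintic.
by case: i => [|[|[|[|[|[|i]]]]]] /=; rewrite ?nth_nil ?conjC0 ?conjC1.
Qed.

Lemma mup_triple f a c d :
  f = \prod_(x <- [:: a; a; a; c; d]) ('X - x%:P) -> [/\ a != c, a != d & c != d] ->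
  [/\ mup a f = 3, mup c f = 1 & mup d f = 1]%N.
Proof.
move=> -> [ac ad cd]; rewrite !mu_prod_XsubC /= !eqxx !(eq_sym _ a) !(eq_sym d c).
by rewrite (negbTE ac) (negbTE ad) (negbTE cd).
Qed.

Lemma triple_root_conj f a c d :
  map_poly Num.conj f = f ->
  f = \prod_(x <- [:: a; a; a; c; d]) ('X - x%:P) -> [/\ a != c, a != d & c != d] ->
  a^* = a /\ (c^* = c /\ d^* = d \/ d = c^*).
Proof.
move=> fR E dist; have [ma mc md] := mup_triple E dist; case: dist => ac ad cd.
have mupC y : mup y^* f = mup y f := mup_conj y fR.
have roots y : (0 < mup y f)%N -> [\/ y = a, y = c | y = d].
  move/(mup_gt0_mem E); rewrite !inE !orbA !orbb -!orbA.
  by case/or3P => /eqP; [constructor 1 | constructor 2 | constructor 3].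
have a_real : a^* = a.
  case: (roots a^*) => [|//|ca'|da']; first by rewrite mupC ma.
    by move: (mupC a); rewrite ca' ma mc.
  by move: (mupC a); rewrite da' ma md.
split=> //; case: (roots c^*) => [|ca'|c_real|->]; [by rewrite mupC mc | | | by right].
  by move: ac; rewrite -[c]conjCK ca' a_real eqxx.
left; split=> //; case: (roots d^*) => [|da'|dc'|//]; first by rewrite mupC md.
  by move: ad; rewrite -[d]conjCK da' a_real eqxx.
by move: cd; rewrite -[d]conjCK dc' c_real eqxx.
Qed.

Lemma mup_two_doubles f a b d :
  f = \prod_(x <- [:: a; a; b; b; d]) ('X - x%:P) -> [/\ a != b, a != d & b != d] ->
  [/\ mup a f = 2, mup b f = 2 & mup d f = 1]%N.
Proof.
move=> -> [ab ad bd]; rewrite !mu_prod_XsubC /= !eqxx !(eq_sym _ a) !(eq_sym d b).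
by rewrite (negbTE ab) (negbTE ad) (negbTE bd).
Qed.

Lemma two_doubles_conj f a b d :
  map_poly Num.conj f = f ->
  f = \prod_(x <- [:: a; a; b; b; d]) ('X - x%:P) -> [/\ a != b, a != d & b != d] ->
  d^* = d /\ (a^* = a /\ b^* = b \/ b = a^*).
Proof.
move=> fR E dist; have [ma mb md] := mup_two_doubles E dist; case: dist => ab _ _.
have mupC y : mup y^* f = mup y f := mup_conj y fR.
have roots y : (0 < mup y f)%N -> [\/ y = a, y = b | y = d].
  move/(mup_gt0_mem E); rewrite !inE !orbA (orbb (y == a)).
  rewrite -(orbA (y == a) (y == b)) (orbb (y == b)) -!orbA.
  by case/or3P => /eqP; [constructor 1 | constructor 2 | constructor 3].
split.
  case: (roots d^*) => [|da'|db'|//]; first by rewrite mupC md.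
    by move: (mupC d); rewrite da' ma md.
  by move: (mupC d); rewrite db' mb md.
case: (roots a^*) => [|a_real|->|da']; [by rewrite mupC ma | | by right |].
  left; split=> //; case: (roots b^*) => [|ba'|//|db']; first by rewrite mupC mb.
    by move: ab; rewrite -[b]conjCK ba' a_real eqxx.
  by move: (mupC b); rewrite db' mb md.
by move: (mupC a); rewrite da' ma md.
Qed.

(* Elementary sign facts: for non-real z, z - z^* is purely imaginary, and
   (a - z)(a - z^* ) = |a - z|^2 for real a. *)
Lemma sqr_sub_conj_lt0 z : z \isn't Num.real -> (z - z^*) ^+ 2 < 0.
Proof.
move=> /CrealP nRz.
have -> : (z - z^*) ^+ 2 = - `|z - z^*| ^+ 2.
  by rewrite normCK rmorphB /= conjCK; ring.
by rewrite oppr_lt0 exprn_gt0 // normr_gt0 subr_eq0 eq_sym; apply/eqP.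
Qed.

Lemma real_sub_conj_gt0 a z : a \is Num.real -> a != z -> 0 < (a - z) * (a - z^*).
Proof.
move=> /CrealP Ra az.
by rewrite -{2}Ra -(rmorphB Num.conj) -normCK exprn_gt0 // normr_gt0 subr_eq0.
Qed.

Lemma sqr_real_gt0 a : a \is Num.real -> a != 0 -> 0 < a ^+ 2.
Proof. by move=> Ra a0; rewrite real_exprn_even_gt0 ?a0 ?orbT. Qed.

Lemma vandermonde3_sqr_gt0 a c d :
  a \is Num.real -> c \is Num.real -> d \is Num.real ->
  [/\ a != c, a != d & c != d] -> 0 < ((a - c) * (a - d) * (c - d)) ^+ 2.
Proof.
move=> Ra Rc Rd [ac ad cd].
by rewrite sqr_real_gt0 ?rpredM ?rpredB // !mulf_neq0 // subr_eq0.
Qed.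

Lemma vandermonde3_conj_sqr_lt0 a c :
  a \is Num.real -> c \isn't Num.real -> ((a - c) * (a - c^*) * (c - c^*)) ^+ 2 < 0.
Proof.
move=> Ra nRc; have ac : a != c by apply: contraNneq nRc => <-.
rewrite exprMn pmulr_rlt0 ?sqr_sub_conj_lt0 //.
by rewrite exprn_gt0 // real_sub_conj_gt0.
Qed.

Lemma two_doubles_D2_factor_gt0 a b d :
  a \is Num.real -> b \is Num.real -> d \is Num.real ->
  [/\ a != b, a != d & b != d] -> 0 < ((a - b) ^+ 2) ^+ 3 * ((d - a) * (d - b)) ^+ 4.
Proof.
move=> Ra Rb Rd [ab ad bd]; apply: mulr_gt0.
  by rewrite exprn_gt0 // sqr_real_gt0 ?rpredB // subr_eq0.
by rewrite real_exprn_even_gt0 ?rpredM ?rpredB // mulf_neq0 // subr_eq0 eq_sym.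
Qed.

Lemma two_doubles_D2_factor_lt0 a d :
  a \isn't Num.real -> d \is Num.real ->
  ((a - a^*) ^+ 2) ^+ 3 * ((d - a) * (d - a^*)) ^+ 4 < 0.
Proof.
move=> nRa Rd; have da : d != a by apply: contraNneq nRa => <-.
have sq_neg : (a - a^*) ^+ 2 < 0 := sqr_sub_conj_lt0 nRa.
rewrite nmulr_rlt0; first by rewrite exprn_gt0 // real_sub_conj_gt0.
by rewrite (@real_exprn_odd_lt0 _ 3 _ (ltr0_real sq_neg)).
Qed.

Definition classification p q r s t : Prop :=
  (0 < D2 p q r s t ->
     exists a b c : C, [/\ a \is Num.real, b \is Num.real, c \is Num.real,
       [/\ a != b, a != c & b != c] &
       [/\ mup a (quintic p q r s t) = 2%N, mup b (quintic p q r s t) = 2%N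
         & mup c (quintic p q r s t) = 1%N]]) /\
  (D2 p q r s t < 0 ->
     exists z c : C, [/\ z \isn't Num.real, c \is Num.real,
       mup z (quintic p q r s t) = 2%N, mup (z^*) (quintic p q r s t) = 2%N
       & mup c (quintic p q r s t) = 1%N]) /\
  (D2 p q r s t = 0 ->
     exists a b c : C, [/\ [/\ a != b, a != c & b != c],
       [/\ mup a (quintic p q r s t) = 3%N, mup b (quintic p q r s t) = 1%N
         & mup c (quintic p q r s t) = 1%N],
       (0 < L2 p q r s t -> [/\ a \is Num.real, b \is Num.real & c \is Num.real])
       & (L2 p q r s t < 0 ->
            [/\ a \is Num.real, b \isn't Num.real & c = b^*])]).

Lemma triple_root_case p q r s t a c d :
  map_poly Num.conj (quintic p q r s t) = quintic p q r s t ->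
  quintic p q r s t = \prod_(x <- [:: a; a; a; c; d]) ('X - x%:P) ->
  L2 p q r s t != 0 -> classification p q r s t.
Proof.
move=> fR E nzL2; have eL2 := L2_triple_root E.
have dist : [/\ a != c, a != d & c != d] by apply: (@vandermonde3_neq0 3); rewrite -eL2.
have [ma mc md] := mup_triple E dist.
have [/CrealP Ra c_cases] := triple_root_conj fR E dist.
have [ac ad cd] := dist.
have signs : (0 < L2 p q r s t -> [/\ a \is Num.real, c \is Num.real & d \is Num.real])
    /\ (L2 p q r s t < 0 -> [/\ a \is Num.real, c \isn't Num.real & d = c^*]).
  case: c_cases => [[/CrealP Rc /CrealP Rd] | d_conj].
    have pos : 0 < L2 p q r s t by rewrite eL2 pmulr_rgt0 ?vandermonde3_sqr_gt0.
    by split=> // neg; move: (lt_trans pos neg); rewrite ltxx.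
  have nRc : c \isn't Num.real.
    by apply: contraNN cd => /CrealP c_real; rewrite d_conj c_real.
  have neg : L2 p q r s t < 0.
    by rewrite eL2 d_conj pmulr_rlt0 ?vandermonde3_conj_sqr_lt0.
  by split=> // pos; move: (lt_trans pos neg); rewrite ltxx.
rewrite /classification (D2_triple_root E) ltxx.
split=> //; split=> // _; exists a, c, d; case: signs => L2_pos L2_neg.
by split; [rewrite ac ad cd | split | |].
Qed.

Lemma two_double_roots_case p q r s t a b d :
  map_poly Num.conj (quintic p q r s t) = quintic p q r s t ->
  quintic p q r s t = \prod_(x <- [:: a; a; b; b; d]) ('X - x%:P) ->
  L2 p q r s t != 0 -> classification p q r s t.
Proof.
move=> fR E nzL2; have eL2 := L2_two_double_roots E; have eD2 := D2_two_double_roots E.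
have dist : [/\ a != b, a != d & b != d] by apply: (@vandermonde3_neq0 4); rewrite -eL2.
have [ma mb md] := mup_two_doubles E dist.
have [/CrealP Rd a_cases] := two_doubles_conj fR E dist.
have [ab ad bd] := dist.
rewrite /classification; case: a_cases => [[/CrealP Ra /CrealP Rb] | b_conj].
  have pos : 0 < D2 p q r s t.
    by rewrite eD2 -mulrA pmulr_rgt0 ?two_doubles_D2_factor_gt0.
  split; first by move=> _; exists a, b, d; split; [| | | rewrite ab ad bd | split].
  split=> [neg | D2_0]; first by move: (lt_trans pos neg); rewrite ltxx.
  by move: pos; rewrite D2_0 ltxx.
have nRa : a \isn't Num.real.
  by apply: contraNN ab => /CrealP a_real; rewrite b_conj a_real.
have neg : D2 p q r s t < 0.
  by rewrite eD2 b_conj -mulrA pmulr_rlt0 ?two_doubles_D2_factor_lt0.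
split; first by move=> pos; move: (lt_trans pos neg); rewrite ltxx.
split; last by move=> D2_0; move: neg; rewrite D2_0 ltxx.
by move=> _; exists a, d; rewrite -b_conj; split.
Qed.

Lemma double_root_case p q r s t a b c d :
  map_poly Num.conj (quintic p q r s t) = quintic p q r s t ->
  quintic p q r s t = \prod_(x <- [:: a; a; b; c; d]) ('X - x%:P) ->
  L1 p q r s t = 0 -> L2 p q r s t != 0 -> classification p q r s t.
Proof.
move=> fR E L1_0 nzL2.
have : (a - b) * (a - c) * (a - d) * (b - c) * (b - d) * (c - d) == 0.
  by move: L1_0; rewrite (L1_double_root E) => /eqP; rewrite mulf_eq0 pnatr_eq0 sqrf_eq0.
rewrite !mulf_eq0 !subr_eq0.
case/orP => [/orP[/orP[/orP[/orP[|]|]|]|]|] /eqP eq_roots; rewrite -{}eq_roots in E.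
- exact: triple_root_case fR E nzL2.
- apply: (triple_root_case (a := a) (c := b) (d := d) fR _ nzL2).
  by rewrite E; apply: perm_big; apply/permP => P /=; lia.
- apply: (triple_root_case (a := a) (c := b) (d := c) fR _ nzL2).
  by rewrite E; apply: perm_big; apply/permP => P /=; lia.
- exact: two_double_roots_case fR E nzL2.
- apply: (two_double_roots_case (a := a) (b := b) (d := c) fR _ nzL2).
  by rewrite E; apply: perm_big; apply/permP => P /=; lia.
- apply: (two_double_roots_case (a := a) (b := c) (d := b) fR _ nzL2).
  by rewrite E; apply: perm_big; apply/permP => P /=; lia.
Qed.

End QuinticRoots.

Theorem mainTheorem3 (C : numClosedFieldType) (p q r s t : C)
  (alpha : 'I_5 -> C) :
  p \is Num.real -> q \is Num.real -> r \is Num.real ->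
  s \is Num.real -> t \is Num.real ->
  quintic p q r s t = \prod_(i < 5) ('X - (alpha i)%:P) ->
  discr5 alpha = 0 -> L1 p q r s t = 0 -> L2 p q r s t != 0 ->
  (* (a) *)
  (0 < D2 p q r s t ->
     exists a b c : C, [/\ a \is Num.real, b \is Num.real, c \is Num.real,
       [/\ a != b, a != c & b != c] &
       [/\ mup a (quintic p q r s t) = 2%N, mup b (quintic p q r s t) = 2%N
         & mup c (quintic p q r s t) = 1%N]]) /\
  (* (b) *)
  (D2 p q r s t < 0 ->
     exists z c : C, [/\ z \isn't Num.real, c \is Num.real,
       mup z (quintic p q r s t) = 2%N, mup (z^*) (quintic p q r s t) = 2%N
       & mup c (quintic p q r s t) = 1%N]) /\
  (* (c) *)
  (D2 p q r s t = 0 ->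
     exists a b c : C, [/\ [/\ a != b, a != c & b != c],
       [/\ mup a (quintic p q r s t) = 3%N, mup b (quintic p q r s t) = 1%N
         & mup c (quintic p q r s t) = 1%N],
       (0 < L2 p q r s t -> [/\ a \is Num.real, b \is Num.real & c \is Num.real])
       & (L2 p q r s t < 0 ->
            [/\ a \is Num.real, b \isn't Num.real & c = b^*])]).
Proof.
move=> Rp Rq Rr Rs Rt E D0 L1_0 nzL2.
have fR := quintic_conj Rp Rq Rr Rs Rt.
have [a [rest perm_roots]] := not_uniq_pair (discr5_not_uniq D0).
have := perm_size perm_roots; rewrite size_codom card_ord.
case: rest perm_roots => [|b [|c [|d []]]] // perm_roots _.
apply: (double_root_case (a := a) (b := b) (c := c) (d := d) fR _ L1_0 nzL2).
by rewrite E -(perm_big _ perm_roots) big_image.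
Qed.
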